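(* Fix real parameters $\ell>0$, $\ell_0\in(0,\ell)$, $\rho>0$, $EI>0$, $m>0$, $\varkappa>0$, $d>0$. Let $s\in\mathbb{C}\setminus\{0\}$ be such that the $4\times4$ matrix $\tilde M=\tilde M(s)$ defined in the context is invertible; write $\tilde M^{-1}=(\tilde M^{-1}_{ij})_{i,j=1}^4$. Let $U\in\mathbb{C}$. Suppose $W:[0,\ell]\to\mathbb{C}$ has restrictions to $[0,\ell_0]$ and $[\ell_0,\ell]$ that are four times continuously differentiable (derivatives at $\ell_0$ one-sided, denoted by arguments $\ell_0\mp 0$), satisfying on $(0,\ell_0)$ and $(\ell_0,\ell)$ $$s^2W(x)+\frac{EI}{\rho}W^{(4)}(x)=0,$$ the boundary conditions $W(0)=W(\ell)=0$, $W''(0)=W''(\ell)=0$, and the interface conditions $W^{(j)}(\ell_0-0)=W^{(j)}(\ell_0+0)$ for $j=0,1,2$ and $$(ms^2+ds+\varkappa)W(\ell_0)=EI\big(W'''(\ell_0-0)-W'''(\ell_0+0)\big)+U.$$ Then for every $\ell_k\in[0,\ell]$ one has $W(\ell_k)=\tilde H_1(s)U$ and $W''(\ell_k)=\tilde H_2(s)U$, where $$\tilde H_1(s)=\begin{cases}\frac1{EI}\Big(\tilde z_2(\ell_k,s)\tilde M^{-1}_{14}+\tilde z_4(\ell_k,s)\tilde M^{-1}_{24}\Big),&\ell_k\in[0,\ell_0],\\[4pt] \frac1{EI}\Big(\tilde z_2(\ell_k-\ell,s)\tilde M^{-1}_{34}+\tilde z_4(\ell_k-\ell,s)\tilde M^{-1}_{44}\Big),&\ell_k\in(\ell_0,\ell],\end{cases}$$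 $$\tilde H_2(s)=\begin{cases}\frac1{EI}\Big(\gamma^4\tilde z_4(\ell_k,s)\tilde M^{-1}_{14}+\tilde z_2(\ell_k,s)\tilde M^{-1}_{24}\Big),&\ell_k\in[0,\ell_0],\\[4pt] \frac1{EI}\Big(\gamma^4\tilde z_4(\ell_k-\ell,s)\tilde M^{-1}_{34}+\tilde z_2(\ell_k-\ell,s)\tilde M^{-1}_{44}\Big),&\ell_k\in(\ell_0,\ell].\end{cases}$$ That is, $\tilde H_1,\tilde H_2$ are the transfer functions of the damped Euler–Bernoulli beam with attached mass, with outputs $w(\ell_k,t)$ and $w''(\ell_k,t)$.
   Context: This is the Laplace transform (zero initial data, Laplace variable $s$) of the simply supported Euler–Bernoulli beam $\ddot w+\frac{EI}{\rho}w^{(4)}=0$ on $[0,\ell]$ with $w=w''=0$ at $x=0,\ell$, continuity of $w,w',w''$ at $\ell_0$, and $(m\ddot w+\varkappa w+d\dot w)|_{x=\ell_0}=EI(w'''|_{\ell_0-0}-w'''|_{\ell_0+0})+F_0$; $W,U$ are the Laplace transforms of $w,F_0$. Parameters: $\rho$ linear density, $EI$ bending stiffness, $m$ attached mass, $\varkappa$ spring stiffness, $d$ damping coefficient. Notation: $\gamma$ is the principal value of $\sqrt[4]{-\rho s^2/(EI)}$, so $\gamma^4=-\rho s^2/(EI)$. For $x\in\mathbb{R}$: $\tilde z_1(x,s)=\cosh\gamma x+\cos\gamma x$, $\tilde z_2(x,s)=\frac1\gamma(\sinh\gamma x+\sin\gamma x)$, $\tilde z_3(x,s)=\frac1{\gamma^2}(\cosh\gamma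 x-\cos\gamma x)$, $\tilde z_4(x,s)=\frac1{\gamma^3}(\sinh\gamma x-\sin\gamma x)$. Let $\tilde v=\frac{ms^2+ds+\varkappa}{EI}$ and write $\tilde z_j^0=\tilde z_j(\ell_0,s)$, $\tilde z_j^-=\tilde z_j(\ell_0-\ell,s)$. The matrix $\tilde M$ has rows Row 1: $\big(\tilde z_2^0,\;\tilde z_4^0,\;-\tilde z_2^-,\;-\tilde z_4^-\big)$; Row 2: $\big(\tilde z_1^0,\;\tilde z_3^0,\;-\tilde z_1^-,\;-\tilde z_3^-\big)$; Row 3: $\big(\gamma^4\tilde z_4^0,\;\tilde z_2^0,\;-\gamma^4\tilde z_4^-,\;-\tilde z_2^-\big)$; Row 4: $\big(\tilde v\tilde z_2^0-\gamma^4\tilde z_3^0,\;\tilde v\tilde z_4^0-\tilde z_1^0,\;\gamma^4\tilde z_3^-,\;\tilde z_1^-\big)$. *)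

From Stdlib Require Import Reals.
From Coquelicot Require Import Coquelicot.

Open Scope C_scope.

Definition Cexp (z : C) : C :=
  (exp (Re z) * cos (Im z), exp (Re z) * sin (Im z))%R.
Definition Ccosh (z : C) : C := (Cexp z + Cexp (- z)) / 2.
Definition Csinh (z : C) : C := (Cexp z - Cexp (- z)) / 2.
Definition Ccos (z : C) : C := (Cexp (Ci * z) + Cexp (- (Ci * z))) / 2.
Definition Csin (z : C) : C := (Cexp (Ci * z) - Cexp (- (Ci * z))) / (2 * Ci).

(** Principal square root (argument in (-pi/2, pi/2]). *)
Definition Csqrt (z : C) : C :=
  (sqrt ((Cmod z + Re z) / 2),
   if Rle_dec 0 (Im z) then sqrt ((Cmod z - Re z) / 2)
   else - sqrt ((Cmod z - Re z) / 2))%R.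

(** Principal fourth root (argument in (-pi/4, pi/4]). *)
Definition Croot4 (z : C) : C := Csqrt (Csqrt z).

Definition gam (rho EI : R) (s : C) : C :=
  Croot4 (- (RtoC rho * (s * s)) / RtoC EI).

Definition zt1 (g : C) (x : R) : C := Ccosh (g * x) + Ccos (g * x).
Definition zt2 (g : C) (x : R) : C := (Csinh (g * x) + Csin (g * x)) / g.
Definition zt3 (g : C) (x : R) : C := (Ccosh (g * x) - Ccos (g * x)) / (g * g).
Definition zt4 (g : C) (x : R) : C := (Csinh (g * x) - Csin (g * x)) / (g * g * g).

Definition Mt (l l0 rho EI m kap d : R) (s : C) (i j : nat) : C :=
  let g := gam rho EI s in
  let g4 := Cpow g 4 in
  let v := (RtoC m * (s * s) + RtoC d * s + RtoC kap) / RtoC EI in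
  let x0 := l0 in
  let xm := (l0 - l)%R in
  match i, j with
  | 1%nat, 1%nat => zt2 g x0 | 1%nat, 2%nat => zt4 g x0 | 1%nat, 3%nat => - zt2 g xm | 1%nat, 4%nat => - zt4 g xm
  | 2%nat, 1%nat => zt1 g x0 | 2%nat, 2%nat => zt3 g x0 | 2%nat, 3%nat => - zt1 g xm | 2%nat, 4%nat => - zt3 g xm
  | 3%nat, 1%nat => g4 * zt4 g x0 | 3%nat, 2%nat => zt2 g x0 | 3%nat, 3%nat => - (g4 * zt4 g xm) | 3%nat, 4%nat => - zt2 g xm
  | 4%nat, 1%nat => v * zt2 g x0 - g4 * zt3 g x0 | 4%nat, 2%nat => v * zt4 g x0 - zt1 g x0
  | 4%nat, 3%nat => g4 * zt3 g xm | 4%nat, 4%nat => zt1 g xm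
  | _, _ => 0
  end.

(** 4x4 matrices as functions on indices 1..4. *)
Definition mul4 (A B : nat -> nat -> C) (i j : nat) : C :=
  A i 1%nat * B 1%nat j + A i 2%nat * B 2%nat j + A i 3%nat * B 3%nat j + A i 4%nat * B 4%nat j.

Definition is_inverse4 (A B : nat -> nat -> C) : Prop :=
  forall i j : nat, (1 <= i <= 4)%nat -> (1 <= j <= 4)%nat ->
    mul4 A B i j = (if Nat.eqb i j then 1 else 0) /\
    mul4 B A i j = (if Nat.eqb i j then 1 else 0).

Definition is_derive_within (a b : R) (f : R -> C) (x : R) (l : C) : Prop :=
  filterlim (fun y => (f y - f x) / RtoC (y - x))
    (within (fun y => a <= y <= b /\ y <> x)%R (locally x)) (locally l).

Definition continuous_within (a b : R) (f : R -> C) (x : R) : Prop :=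
  filterlim f (within (fun y => a <= y <= b)%R (locally x)) (locally (f x)).

(** f restricted to [a,b] is n times continuously differentiable, and
    D k is its k-th derivative on [a,b] (one-sided at a and b). *)
Definition Cn_on (n : nat) (a b : R) (f : R -> C) (D : nat -> R -> C) : Prop :=
  (forall x, (a <= x <= b)%R -> D O x = f x) /\
  (forall k x, (k < n)%nat -> (a <= x <= b)%R -> is_derive_within a b (D k) x (D (S k) x)) /\
  (forall x, (a <= x <= b)%R -> continuous_within a b (D n) x).

Definition Ht1 (l l0 rho EI : R) (s : C) (Minv : nat -> nat -> C) (lk : R) : C :=
  let g := gam rho EI s in
  if Rle_dec lk l0 then
    / RtoC EI * (zt2 g lk * Minv 1%nat 4%nat + zt4 g lk * Minv 2%nat 4%nat)
  else
    / RtoC EI * (zt2 g (lk - l)%R * Minv 3%nat 4%nat + zt4 g (lk - l)%R * Minv 4%nat 4%nat).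

Definition Ht2 (l l0 rho EI : R) (s : C) (Minv : nat -> nat -> C) (lk : R) : C :=
  let g := gam rho EI s in
  if Rle_dec lk l0 then
    / RtoC EI * (Cpow g 4 * zt4 g lk * Minv 1%nat 4%nat + zt2 g lk * Minv 2%nat 4%nat)
  else
    / RtoC EI * (Cpow g 4 * zt4 g (lk - l)%R * Minv 3%nat 4%nat
                 + zt2 g (lk - l)%R * Minv 4%nat 4%nat).

From Stdlib Require Import Reals Lra Lia.
From Coquelicot Require Import Coquelicot.
Open Scope C_scope.

(* On each segment, (W, W', W'', W''') solves the first-order system Y' = A Y where A is
   the companion matrix of Y'''' = gamma^4 Y; so does a z~2(x - x_e) + b z~4(x - x_e)
   for the outer end x_e.  Both vanish with their second derivative at x_e, and their
   first and third derivatives agree there for a = W'(x_e)/2, b = W'''(x_e)/2, so an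
   energy (Gronwall) estimate on |Y|^2 shows that they coincide.  The three continuity
   conditions and the force balance at l0 then state that M~ maps the four coefficients
   to (0, 0, 0, U/EI), hence they are U/EI times the last column of M~^{-1}. *)

Lemma RtoC_neq0 (r : R) : r <> 0%R -> RtoC r <> 0.
Proof. intros Hr E. apply Hr. exact (f_equal fst E). Qed.

Lemma Cdiv_RtoC_fst (z : C) (r : R) : r <> 0%R -> fst (z / RtoC r) = (fst z / r)%R.
Proof. intros Hr. destruct z. unfold Cdiv, Cinv, Cmult, RtoC. simpl. field. exact Hr. Qed.

Lemma Cdiv_RtoC_snd (z : C) (r : R) : r <> 0%R -> snd (z / RtoC r) = (snd z / r)%R.
Proof. intros Hr. destruct z. unfold Cdiv, Cinv, Cmult, RtoC. simpl. field. exact Hr. Qed.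

Lemma ball_C (l z : C) (e : R) :
  ball l e z <-> (Rabs (fst z - fst l) < e /\ Rabs (snd z - snd l) < e)%R.
Proof.
  destruct l, z. unfold ball. simpl. unfold prod_ball. simpl.
  unfold AbsRing_ball, abs, minus, plus, opp. simpl. tauto.
Qed.

Lemma ball_R (l z e : R) : ball l e z <-> (Rabs (z - l) < e)%R.
Proof. unfold ball. simpl. unfold AbsRing_ball, abs, minus, plus, opp. simpl. tauto. Qed.

Section DeriveWithin.
Variables a b : R.

Lemma is_derive_within_of_components (f : R -> C) (x : R) (l : C) :
  derivable_pt_lim (fun y => fst (f y)) x (fst l) ->
  derivable_pt_lim (fun y => snd (f y)) x (snd l) ->
  is_derive_within a b f x l.
Proof.
  intros H1 H2 P [eps HP].
  destruct (H1 eps (cond_pos eps)) as [d1 Hd1].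
  destruct (H2 eps (cond_pos eps)) as [d2 Hd2].
  assert (Hd : (0 < Rmin d1 d2)%R) by (apply Rmin_pos; apply cond_pos).
  exists (mkposreal _ Hd). intros y Hy [_ Hyx]. change R in y. apply HP.
  pose proof (proj1 (ball_R _ _ _) Hy) as Hyx'. simpl in Hyx'.
  pose proof (Rmin_l d1 d2). pose proof (Rmin_r d1 d2).
  assert (Hh : (y - x <> 0)%R) by (intro; apply Hyx; lra).
  apply ball_C. rewrite Cdiv_RtoC_fst, Cdiv_RtoC_snd by exact Hh.
  specialize (Hd1 (y - x)%R Hh). specialize (Hd2 (y - x)%R Hh).
  replace (x + (y - x))%R with y in Hd1, Hd2 by ring.
  destruct (f y), (f x). simpl in Hd1, Hd2 |- *.
  split; [apply Hd1 | apply Hd2]; lra.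
Qed.

Lemma is_derive_within_components (f : R -> C) (x : R) (l : C) :
  (a < x < b)%R -> is_derive_within a b f x l ->
  derivable_pt_lim (fun y => fst (f y)) x (fst l) /\
  derivable_pt_lim (fun y => snd (f y)) x (snd l).
Proof.
  intros Hx H.
  assert (K : forall eps : posreal, exists d : posreal, forall h, h <> 0%R -> (Rabs h < d)%R ->
    (Rabs ((fst (f (x + h)) - fst (f x)) / h - fst l) < eps /\
     Rabs ((snd (f (x + h)) - snd (f x)) / h - snd l) < eps)%R).
  { intros eps.
    destruct (H (ball l eps) (locally_ball l eps)) as [d Hd].
    assert (Hd' : (0 < Rmin d (Rmin (x - a) (b - x)))%R).
    { apply Rmin_pos; [apply cond_pos | apply Rmin_pos; lra]. }
    exists (mkposreal _ Hd'). intros h Hh Hhd. simpl in Hhd.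
    pose proof (Rmin_l d (Rmin (x - a) (b - x))). pose proof (Rmin_r d (Rmin (x - a) (b - x))).
    pose proof (Rmin_l (x - a) (b - x)). pose proof (Rmin_r (x - a) (b - x)).
    assert (HB : ball x d (x + h)%R).
    { apply ball_R. replace (x + h - x)%R with h by ring. lra. }
    assert (Hin : (a <= x + h <= b /\ x + h <> x)%R) by (apply Rabs_def2 in Hhd; lra).
    specialize (Hd _ HB Hin). pose proof (proj1 (ball_C _ _ _) Hd) as Hd2.
    rewrite Cdiv_RtoC_fst, Cdiv_RtoC_snd in Hd2 by lra.
    replace (x + h - x)%R with h in Hd2 by ring. exact Hd2. }
  split; intros eps Heps; destruct (K (mkposreal _ Heps)) as [d Hd];
    exists d; intros h Hh1 Hh2; apply (Hd h Hh1 Hh2).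
Qed.

Lemma is_derive_within_continuous (f : R -> C) (x : R) (l : C) :
  is_derive_within a b f x l ->
  forall eps : posreal, exists d : posreal, forall y, (a <= y <= b)%R -> (Rabs (y - x) < d)%R ->
    (Rabs (fst (f y) - fst (f x)) < eps /\ Rabs (snd (f y) - snd (f x)) < eps)%R.
Proof.
  intros H.
  destruct (H (ball l (mkposreal 1 Rlt_0_1)) (locally_ball l _)) as [d0 Hd0].
  set (L := (Rabs (fst l) + Rabs (snd l) + 1)%R).
  assert (HL : (0 < L)%R)
    by (unfold L; pose proof (Rabs_pos (fst l)); pose proof (Rabs_pos (snd l)); lra).
  assert (Lip : forall y, (a <= y <= b)%R -> (Rabs (y - x) < d0)%R ->
    (Rabs (fst (f y) - fst (f x)) <= L * Rabs (y - x) /\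
     Rabs (snd (f y) - snd (f x)) <= L * Rabs (y - x))%R).
  { intros y Hy Hyd. destruct (Req_dec y x) as [->|Hne].
    { rewrite !Rminus_diag, Rabs_R0, Rmult_0_r. lra. }
    assert (HB : ball x d0 y) by (apply ball_R; exact Hyd).
    specialize (Hd0 y HB (conj Hy Hne)). destruct (proj1 (ball_C _ _ _) Hd0) as [H1 H2].
    rewrite Cdiv_RtoC_fst in H1 by lra. rewrite Cdiv_RtoC_snd in H2 by lra.
    assert (Hyx : (y - x <> 0)%R) by lra.
    destruct (f y) as [u1 u2], (f x) as [v1 v2]. simpl in H1, H2 |- *.
    fold (u1 - v1)%R (u2 - v2)%R in H1, H2.
    replace (u1 - v1)%R with ((u1 - v1) / (y - x) * (y - x))%R by (field; exact Hyx).
    replace (u2 - v2)%R with ((u2 - v2) / (y - x) * (y - x))%R by (field; exact Hyx).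
    rewrite (Rabs_mult ((u1 - v1) / (y - x))), (Rabs_mult ((u2 - v2) / (y - x))).
    pose proof (Rabs_triang_inv ((u1 - v1) / (y - x)) (fst l)).
    pose proof (Rabs_triang_inv ((u2 - v2) / (y - x)) (snd l)).
    pose proof (Rabs_pos (fst l)). pose proof (Rabs_pos (snd l)). pose proof (Rabs_pos (y - x)).
    split; apply Rmult_le_compat_r; unfold L; lra. }
  intros eps.
  assert (Hd : (0 < Rmin d0 (eps / L))%R)
    by (apply Rmin_pos; [apply cond_pos | apply Rdiv_lt_0_compat; [apply cond_pos | exact HL]]).
  exists (mkposreal _ Hd). intros y Hy Hyd. simpl in Hyd.
  pose proof (Rmin_l d0 (eps / L)). pose proof (Rmin_r d0 (eps / L)).
  destruct (Lip y Hy ltac:(lra)) as [K1 K2].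
  assert (Heps : (L * Rabs (y - x) < eps)%R).
  { apply Rlt_le_trans with (L * (eps / L))%R; [apply Rmult_lt_compat_l; lra | right; field; lra]. }
  lra.
Qed.

Lemma is_derive_within_ext (f g : R -> C) (x : R) (l : C) :
  (forall y, f y = g y) -> is_derive_within a b f x l -> is_derive_within a b g x l.
Proof.
  intros E H. unfold is_derive_within in *.
  eapply filterlim_ext; [|exact H]. intros y. simpl. rewrite !E. reflexivity.
Qed.

Lemma is_derive_within_plus (f g : R -> C) (x : R) (l1 l2 : C) :
  is_derive_within a b f x l1 -> is_derive_within a b g x l2 ->
  is_derive_within a b (fun y => f y + g y) x (l1 + l2).
Proof.
  intros Hf Hg. unfold is_derive_within in *.
  eapply filterlim_ext.
  2: { eapply filterlim_comp_2;
       [exact Hf | exact Hg | apply (@filterlim_plus C_AbsRing C_NormedModule)]. }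
  intros y. simpl. unfold plus. simpl. unfold Cdiv. ring.
Qed.

Lemma is_derive_within_scal (p : C) (f : R -> C) (x : R) (l : C) :
  is_derive_within a b f x l -> is_derive_within a b (fun y => p * f y) x (p * l).
Proof.
  intros Hf. unfold is_derive_within in *.
  eapply filterlim_ext.
  2: { eapply filterlim_comp_2;
       [apply (@filterlim_const _ (AbsRing_UniformSpace C_AbsRing)) | exact Hf
       | apply (@filterlim_scal C_AbsRing C_NormedModule)].
       apply within_filter, locally_filter. }
  intros y. simpl. unfold scal. simpl. unfold mult. simpl. unfold Cdiv. ring.
Qed.

Lemma is_derive_within_lincomb (p q : C) (f g : R -> C) (x : R) (l1 l2 : C) :
  is_derive_within a b f x l1 -> is_derive_within a b g x l2 ->
  is_derive_within a b (fun y => p * f y + q * g y) x (p * l1 + q * l2).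
Proof.
  intros Hf Hg. apply is_derive_within_plus; apply is_derive_within_scal; assumption.
Qed.

Lemma is_derive_within_minus (f g : R -> C) (x : R) (l1 l2 : C) :
  is_derive_within a b f x l1 -> is_derive_within a b g x l2 ->
  is_derive_within a b (fun y => f y - g y) x (l1 - l2).
Proof.
  intros Hf Hg.
  apply (is_derive_within_ext (fun y => 1 * f y + (-1) * g y)); [intros y; ring |].
  replace (l1 - l2) with (1 * l1 + (-1) * l2) by ring.
  apply is_derive_within_lincomb; assumption.
Qed.
End DeriveWithin.

Definition cexp_shift (c : C) (x0 y : R) : C := Cexp (c * RtoC (y - x0)).

Lemma cexp_shift_fst (c : C) (x0 y : R) :
  fst (cexp_shift c x0 y) = (exp (fst c * (y - x0)) * cos (snd c * (y - x0)))%R.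
Proof.
  destruct c as [c1 c2]. unfold cexp_shift, Cexp, RtoC. simpl.
  replace (c1 * (y - x0) - c2 * 0)%R with (c1 * (y - x0))%R by ring.
  replace (c1 * 0 + c2 * (y - x0))%R with (c2 * (y - x0))%R by ring. reflexivity.
Qed.

Lemma cexp_shift_snd (c : C) (x0 y : R) :
  snd (cexp_shift c x0 y) = (exp (fst c * (y - x0)) * sin (snd c * (y - x0)))%R.
Proof.
  destruct c as [c1 c2]. unfold cexp_shift, Cexp, RtoC. simpl.
  replace (c1 * (y - x0) - c2 * 0)%R with (c1 * (y - x0))%R by ring.
  replace (c1 * 0 + c2 * (y - x0))%R with (c2 * (y - x0))%R by ring. reflexivity.
Qed.

Lemma is_derive_within_cexp_shift (a b : R) (c : C) (x0 x : R) :
  is_derive_within a b (cexp_shift c x0) x (c * cexp_shift c x0 x).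
Proof.
  destruct c as [c1 c2].
  apply is_derive_within_of_components; apply is_derive_Reals.
  - change (fst ((c1, c2) * cexp_shift (c1, c2) x0 x))
      with (c1 * fst (cexp_shift (c1, c2) x0 x) - c2 * snd (cexp_shift (c1, c2) x0 x))%R.
    eapply is_derive_ext; [intros t; symmetry; apply cexp_shift_fst |].
    rewrite cexp_shift_fst, cexp_shift_snd. simpl. auto_derive; [exact I | unfold Rminus; ring].
  - change (snd ((c1, c2) * cexp_shift (c1, c2) x0 x))
      with (c1 * snd (cexp_shift (c1, c2) x0 x) + c2 * fst (cexp_shift (c1, c2) x0 x))%R.
    eapply is_derive_ext; [intros t; symmetry; apply cexp_shift_snd |].
    rewrite cexp_shift_fst, cexp_shift_snd. simpl. auto_derive; [exact I | unfold Rminus; ring].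
Qed.

Ltac Cexpand :=
  unfold Cmult, Cplus, Cminus, Copp, Cdiv, Cinv, Ci, RtoC; simpl;
  apply injective_projections; simpl; field.

Lemma Ccosh_cexp_shift (g : C) (x0 y : R) :
  Ccosh (g * RtoC (y - x0)) = /2 * cexp_shift g x0 y + /2 * cexp_shift (-g) x0 y.
Proof.
  unfold Ccosh, cexp_shift. replace (- (g * RtoC (y - x0))) with (- g * RtoC (y - x0)) by ring.
  unfold Cdiv. ring.
Qed.

Lemma Csinh_cexp_shift (g : C) (x0 y : R) :
  Csinh (g * RtoC (y - x0)) = /2 * cexp_shift g x0 y + - /2 * cexp_shift (-g) x0 y.
Proof.
  unfold Csinh, cexp_shift. replace (- (g * RtoC (y - x0))) with (- g * RtoC (y - x0)) by ring.
  unfold Cdiv. ring.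
Qed.

Lemma Ccos_cexp_shift (g : C) (x0 y : R) :
  Ccos (g * RtoC (y - x0)) = /2 * cexp_shift (Ci * g) x0 y + /2 * cexp_shift (- (Ci * g)) x0 y.
Proof.
  unfold Ccos, cexp_shift.
  replace (Ci * (g * RtoC (y - x0))) with (Ci * g * RtoC (y - x0)) by ring.
  replace (- (Ci * g * RtoC (y - x0))) with (- (Ci * g) * RtoC (y - x0)) by ring.
  unfold Cdiv. ring.
Qed.

Lemma Csin_cexp_shift (g : C) (x0 y : R) :
  Csin (g * RtoC (y - x0)) =
  - Ci / 2 * cexp_shift (Ci * g) x0 y + Ci / 2 * cexp_shift (- (Ci * g)) x0 y.
Proof.
  unfold Csin, cexp_shift.
  replace (Ci * (g * RtoC (y - x0))) with (Ci * g * RtoC (y - x0)) by ring.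
  replace (- (Ci * g * RtoC (y - x0))) with (- (Ci * g) * RtoC (y - x0)) by ring.
  generalize (Cexp (Ci * g * RtoC (y - x0))) (Cexp (- (Ci * g) * RtoC (y - x0))).
  intros [u1 u2] [v1 v2]. Cexpand.
Qed.

Section Trigonometric.
Variables (a b : R) (g : C) (x0 : R).

Lemma is_derive_within_Ccosh (x : R) :
  is_derive_within a b (fun y => Ccosh (g * RtoC (y - x0))) x (g * Csinh (g * RtoC (x - x0))).
Proof.
  eapply is_derive_within_ext; [intro y; symmetry; apply Ccosh_cexp_shift |].
  rewrite Csinh_cexp_shift.
  replace (g * (/2 * cexp_shift g x0 x + - /2 * cexp_shift (- g) x0 x))
    with (/2 * (g * cexp_shift g x0 x) + /2 * (- g * cexp_shift (- g) x0 x)) by ring.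
  apply is_derive_within_lincomb; apply is_derive_within_cexp_shift.
Qed.

Lemma is_derive_within_Csinh (x : R) :
  is_derive_within a b (fun y => Csinh (g * RtoC (y - x0))) x (g * Ccosh (g * RtoC (x - x0))).
Proof.
  eapply is_derive_within_ext; [intro y; symmetry; apply Csinh_cexp_shift |].
  rewrite Ccosh_cexp_shift.
  replace (g * (/2 * cexp_shift g x0 x + /2 * cexp_shift (- g) x0 x))
    with (/2 * (g * cexp_shift g x0 x) + - /2 * (- g * cexp_shift (- g) x0 x)) by ring.
  apply is_derive_within_lincomb; apply is_derive_within_cexp_shift.
Qed.

Lemma is_derive_within_Ccos (x : R) :
  is_derive_within a b (fun y => Ccos (g * RtoC (y - x0))) x (- (g * Csin (g * RtoC (x - x0)))).
Proof.
  eapply is_derive_within_ext; [intro y; symmetry; apply Ccos_cexp_shift |].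
  rewrite Csin_cexp_shift.
  replace (- (g * (- Ci / 2 * cexp_shift (Ci * g) x0 x + Ci / 2 * cexp_shift (- (Ci * g)) x0 x)))
    with (/2 * (Ci * g * cexp_shift (Ci * g) x0 x)
          + /2 * (- (Ci * g) * cexp_shift (- (Ci * g)) x0 x)).
  2: { generalize (cexp_shift (Ci * g) x0 x) (cexp_shift (- (Ci * g)) x0 x).
       destruct g as [g1 g2]. intros [u1 u2] [v1 v2]. Cexpand. }
  apply is_derive_within_lincomb; apply is_derive_within_cexp_shift.
Qed.

Lemma is_derive_within_Csin (x : R) :
  is_derive_within a b (fun y => Csin (g * RtoC (y - x0))) x (g * Ccos (g * RtoC (x - x0))).
Proof.
  eapply is_derive_within_ext; [intro y; symmetry; apply Csin_cexp_shift |].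
  rewrite Ccos_cexp_shift.
  replace (g * (/2 * cexp_shift (Ci * g) x0 x + /2 * cexp_shift (- (Ci * g)) x0 x))
    with (- Ci / 2 * (Ci * g * cexp_shift (Ci * g) x0 x)
          + Ci / 2 * (- (Ci * g) * cexp_shift (- (Ci * g)) x0 x)).
  2: { generalize (cexp_shift (Ci * g) x0 x) (cexp_shift (- (Ci * g)) x0 x).
       destruct g as [g1 g2]. intros [u1 u2] [v1 v2]. Cexpand. }
  apply is_derive_within_lincomb; apply is_derive_within_cexp_shift.
Qed.

Hypothesis Hg : g <> 0.

Lemma is_derive_within_zt1 (x : R) :
  is_derive_within a b (fun y => zt1 g (y - x0)) x (Cpow g 4 * zt4 g (x - x0)).
Proof.
  apply (is_derive_within_ext a b
    (fun y => 1 * Ccosh (g * RtoC (y - x0)) + 1 * Ccos (g * RtoC (y - x0))));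
    [intro y; unfold zt1; ring |].
  unfold zt4. simpl.
  replace (g * (g * (g * (g * 1)))
           * ((Csinh (g * RtoC (x - x0)) - Csin (g * RtoC (x - x0))) / (g * g * g)))
    with (1 * (g * Csinh (g * RtoC (x - x0))) + 1 * (- (g * Csin (g * RtoC (x - x0)))))
    by (field; exact Hg).
  apply is_derive_within_lincomb; [apply is_derive_within_Ccosh | apply is_derive_within_Ccos].
Qed.

Lemma is_derive_within_zt2 (x : R) :
  is_derive_within a b (fun y => zt2 g (y - x0)) x (zt1 g (x - x0)).
Proof.
  apply (is_derive_within_ext a b
    (fun y => / g * Csinh (g * RtoC (y - x0)) + / g * Csin (g * RtoC (y - x0))));
    [intro y; unfold zt2; field; exact Hg |].
  unfold zt1.
  replace (Ccosh (g * RtoC (x - x0)) + Ccos (g * RtoC (x - x0)))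
    with (/ g * (g * Ccosh (g * RtoC (x - x0))) + / g * (g * Ccos (g * RtoC (x - x0))))
    by (field; exact Hg).
  apply is_derive_within_lincomb; [apply is_derive_within_Csinh | apply is_derive_within_Csin].
Qed.

Lemma is_derive_within_zt3 (x : R) :
  is_derive_within a b (fun y => zt3 g (y - x0)) x (zt2 g (x - x0)).
Proof.
  apply (is_derive_within_ext a b
    (fun y => / (g * g) * Ccosh (g * RtoC (y - x0)) + - / (g * g) * Ccos (g * RtoC (y - x0))));
    [intro y; unfold zt3; field; exact Hg |].
  unfold zt2.
  replace ((Csinh (g * RtoC (x - x0)) + Csin (g * RtoC (x - x0))) / g)
    with (/ (g * g) * (g * Csinh (g * RtoC (x - x0)))
          + - / (g * g) * (- (g * Csin (g * RtoC (x - x0))))) by (field; exact Hg).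
  apply is_derive_within_lincomb; [apply is_derive_within_Ccosh | apply is_derive_within_Ccos].
Qed.

Lemma is_derive_within_zt4 (x : R) :
  is_derive_within a b (fun y => zt4 g (y - x0)) x (zt3 g (x - x0)).
Proof.
  apply (is_derive_within_ext a b
    (fun y => / (g * g * g) * Csinh (g * RtoC (y - x0))
              + - / (g * g * g) * Csin (g * RtoC (y - x0))));
    [intro y; unfold zt4; field; exact Hg |].
  unfold zt3.
  replace ((Ccosh (g * RtoC (x - x0)) - Ccos (g * RtoC (x - x0))) / (g * g))
    with (/ (g * g * g) * (g * Ccosh (g * RtoC (x - x0)))
          + - / (g * g * g) * (g * Ccos (g * RtoC (x - x0)))) by (field; exact Hg).
  apply is_derive_within_lincomb; [apply is_derive_within_Csinh | apply is_derive_within_Csin].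
Qed.
End Trigonometric.

Lemma Csqrt_sqr (z : C) : Csqrt z * Csqrt z = z.
Proof.
  destruct z as [x y]. unfold Csqrt, Cmod, Cmult. simpl.
  replace (x * (x * 1) + y * (y * 1))%R with (x ^ 2 + y ^ 2)%R by ring.
  set (r := sqrt (x ^ 2 + y ^ 2)).
  assert (Hr : (Rabs x <= r)%R).
  { unfold r. rewrite <- sqrt_Rsqr_abs. apply sqrt_le_1_alt. unfold Rsqr. nra. }
  assert (Hrr : (r * r = x ^ 2 + y ^ 2)%R) by (unfold r; rewrite sqrt_sqrt; [ring | nra]).
  apply Rabs_le_between in Hr.
  assert (HA : (sqrt ((r + x) / 2) * sqrt ((r + x) / 2) = (r + x) / 2)%R) by (apply sqrt_sqrt; lra).
  assert (HB : (sqrt ((r - x) / 2) * sqrt ((r - x) / 2) = (r - x) / 2)%R) by (apply sqrt_sqrt; lra).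
  assert (HAB : (2 * (sqrt ((r + x) / 2) * sqrt ((r - x) / 2)) = Rabs y)%R).
  { rewrite <- sqrt_mult by lra.
    replace ((r + x) / 2 * ((r - x) / 2))%R with (Rsqr (y / 2)) by (unfold Rsqr; field_simplify; nra).
    rewrite sqrt_Rsqr_abs. unfold Rdiv. rewrite Rabs_mult, (Rabs_right (/ 2)) by lra. field. }
  apply injective_projections; simpl; destruct (Rle_dec 0 y).
  - nra.
  - nra.
  - rewrite Rabs_right in HAB by lra. nra.
  - rewrite Rabs_left in HAB by lra. nra.
Qed.

Lemma gam_pow4 (rho EI : R) (s : C) : Cpow (gam rho EI s) 4 = - (RtoC rho * (s * s)) / RtoC EI.
Proof.
  unfold gam, Croot4. simpl. rewrite Cmult_1_r.
  set (z := Csqrt (Csqrt _)).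
  replace (z * (z * (z * z))) with ((z * z) * (z * z)) by ring.
  unfold z. rewrite !Csqrt_sqr. reflexivity.
Qed.

Lemma gam_neq0 (rho EI : R) (s : C) :
  rho <> 0%R -> EI <> 0%R -> s <> 0 -> gam rho EI s <> 0.
Proof.
  intros Hrho HEI Hs E.
  assert (Hrho' := RtoC_neq0 rho Hrho). assert (HEI' := RtoC_neq0 EI HEI).
  assert (H4 := gam_pow4 rho EI s). rewrite E in H4.
  assert (Z : RtoC rho * (s * s) = 0).
  { replace (RtoC rho * (s * s)) with (- (- (RtoC rho * (s * s)) / RtoC EI) * RtoC EI)
      by (field; exact HEI').
    rewrite <- H4. simpl. ring. }
  revert Z. apply Cmult_neq_0; [exact Hrho' | apply Cmult_neq_0; exact Hs].
Qed.

Lemma Cexp_0 : Cexp 0 = 1.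
Proof.
  unfold Cexp. simpl. rewrite exp_0, cos_0, sin_0. apply injective_projections; simpl; ring.
Qed.

Lemma zt_at_0 (g : C) :
  g <> 0 -> zt1 g 0%R = 2 /\ zt2 g 0%R = 0 /\ zt3 g 0%R = 0 /\ zt4 g 0%R = 0.
Proof.
  intros Hg.
  assert (E0 : g * RtoC 0 = 0) by ring.
  assert (E1 : Ci * (g * RtoC 0) = 0) by (rewrite E0; ring).
  assert (HCi : Ci <> 0) by (intro H; apply (f_equal snd) in H; simpl in H; lra).
  unfold zt1, zt2, zt3, zt4, Ccosh, Csinh, Ccos, Csin. rewrite E1, E0.
  replace (- 0 : C) with (0 : C) by ring. rewrite Cexp_0.
  repeat split; field; auto.
Qed.

Definition clamp (a b y : R) : R := Rmax a (Rmin b y).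

Lemma clamp_in (a b y : R) : (a <= b)%R -> (a <= clamp a b y <= b)%R.
Proof. intros. unfold clamp, Rmax, Rmin. repeat destruct Rle_dec; lra. Qed.

Lemma clamp_id (a b y : R) : (a <= y <= b)%R -> clamp a b y = y.
Proof. intros. unfold clamp, Rmax, Rmin. repeat destruct Rle_dec; lra. Qed.

Lemma clamp_dist (a b y z : R) :
  (a <= b)%R -> (Rabs (clamp a b y - clamp a b z) <= Rabs (y - z))%R.
Proof.
  intros. unfold clamp, Rmax, Rmin. repeat destruct Rle_dec; unfold Rabs; repeat destruct Rcase_abs; lra.
Qed.

Section Clamp.
Variables (a b : R) (f : R -> C).

Lemma continuous_clamp_components (x : R) (l : C) :
  (a <= b)%R -> (a <= x <= b)%R -> is_derive_within a b f x l ->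
  continuous (fun t => fst (f (clamp a b t))) x /\ continuous (fun t => snd (f (clamp a b t))) x.
Proof.
  intros Hab Hx H.
  assert (K : forall eps : posreal, exists d : posreal, forall t, (Rabs (t - x) < d)%R ->
    (Rabs (fst (f (clamp a b t)) - fst (f (clamp a b x))) < eps /\
     Rabs (snd (f (clamp a b t)) - snd (f (clamp a b x))) < eps)%R).
  { intros eps. destruct (is_derive_within_continuous a b f x l H eps) as [d Hd].
    exists d. intros t Ht. rewrite (clamp_id a b x Hx).
    pose proof (clamp_dist a b t x Hab) as Hc. rewrite (clamp_id a b x Hx) in Hc.
    apply Hd; [apply clamp_in; exact Hab | lra]. }
  split; apply (proj1 (continuity_pt_filterlim _ _)); intros eps Heps;
    destruct (K (mkposreal eps Heps)) as [d Hd]; exists d; split; try apply cond_pos;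
    intros t [_ Ht]; apply Hd; exact Ht.
Qed.

Lemma is_derive_clamp_components (x : R) (l : C) :
  (a < x < b)%R -> is_derive_within a b f x l ->
  is_derive (fun t => fst (f (clamp a b t))) x (fst l) /\
  is_derive (fun t => snd (f (clamp a b t))) x (snd l).
Proof.
  intros Hx H.
  destruct (is_derive_within_components a b f x l Hx H) as [H1 H2].
  assert (Hd : (0 < Rmin (x - a) (b - x))%R) by (apply Rmin_pos; lra).
  assert (Hloc : locally x (fun t => clamp a b t = t)).
  { exists (mkposreal _ Hd). intros t Ht.
    pose proof (proj1 (ball_R x t _) Ht) as Ht'. simpl in Ht'.
    pose proof (Rmin_l (x - a) (b - x)). pose proof (Rmin_r (x - a) (b - x)).
    apply Rabs_def2 in Ht'. apply clamp_id. lra. }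
  split.
  - eapply is_derive_ext_loc; [| apply is_derive_Reals; exact H1].
    eapply filter_imp; [| exact Hloc]. intros t Ht. simpl. rewrite Ht. reflexivity.
  - eapply is_derive_ext_loc; [| apply is_derive_Reals; exact H2].
    eapply filter_imp; [| exact Hloc]. intros t Ht. simpl. rewrite Ht. reflexivity.
Qed.
End Clamp.

Definition cnorm2 (z : C) : R := (fst z * fst z + snd z * snd z)%R.
Definition cdot (z w : C) : R := (fst z * fst w + snd z * snd w)%R.

Lemma cnorm2_nonneg (z : C) : (0 <= cnorm2 z)%R.
Proof. unfold cnorm2. nra. Qed.

Lemma cnorm2_Cmult (z w : C) : cnorm2 (z * w) = (cnorm2 z * cnorm2 w)%R.
Proof. destruct z, w. unfold cnorm2, Cmult. simpl. ring. Qed.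

Lemma cdot_bound (z w : C) : (Rabs (2 * cdot z w) <= cnorm2 z + cnorm2 w)%R.
Proof.
  destruct z as [z1 z2], w as [w1 w2]. unfold cdot, cnorm2. simpl.
  pose proof (Rle_0_sqr (z1 + w1)). pose proof (Rle_0_sqr (z1 - w1)).
  pose proof (Rle_0_sqr (z2 + w2)). pose proof (Rle_0_sqr (z2 - w2)). unfold Rsqr in *.
  apply Rabs_le. split; nra.
Qed.

Lemma is_derive_cnorm2 (f : R -> C) (x : R) (l : C) :
  is_derive (fun t => fst (f t)) x (fst l) -> is_derive (fun t => snd (f t)) x (snd l) ->
  is_derive (fun t => cnorm2 (f t)) x (2 * cdot (f x) l)%R.
Proof.
  intros H1 H2. unfold cnorm2, cdot.
  set (u := fun t => fst (f t)) in *. set (v := fun t => snd (f t)) in *.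
  change (is_derive (fun t => u t * u t + v t * v t)%R x (2 * (u x * fst l + v x * snd l))%R).
  auto_derive.
  - repeat split; first [exists (fst l); exact H1 | exists (snd l); exact H2].
  - replace (Derive (fun t : R => u t) x) with (fst l) by (symmetry; apply is_derive_unique; exact H1).
    replace (Derive (fun t : R => v t) x) with (snd l) by (symmetry; apply is_derive_unique; exact H2).
    ring.
Qed.

Section Energy.
Variable E : nat -> R -> C.

Definition energy4 (t : R) : R :=
  (cnorm2 (E 0%nat t) + cnorm2 (E 1%nat t) + cnorm2 (E 2%nat t) + cnorm2 (E 3%nat t))%R.

Definition energy4_deriv (D : nat -> R -> C) (t : R) : R :=
  (2 * (cdot (E 0%nat t) (D 0%nat t) + cdot (E 1%nat t) (D 1%nat t)
        + cdot (E 2%nat t) (D 2%nat t) + cdot (E 3%nat t) (D 3%nat t)))%R.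

Lemma energy4_nonneg (t : R) : (0 <= energy4 t)%R.
Proof.
  unfold energy4.
  pose proof (cnorm2_nonneg (E 0%nat t)). pose proof (cnorm2_nonneg (E 1%nat t)).
  pose proof (cnorm2_nonneg (E 2%nat t)). pose proof (cnorm2_nonneg (E 3%nat t)). lra.
Qed.

Lemma energy4_eq0 (t : R) : energy4 t = 0%R -> forall k, (k <= 3)%nat -> E k t = 0.
Proof.
  unfold energy4, cnorm2. intros H k Hk.
  assert (Z : forall r : R, (r * r <= 0)%R -> r = 0%R) by (intros r Hr; nra).
  destruct k as [|[|[|[|k]]]]; try lia;
    apply injective_projections; simpl; apply Z; nra.
Qed.

Lemma is_derive_energy4 (D : nat -> R -> C) (y : R) :
  (forall k, (k <= 3)%nat ->
     is_derive (fun t => fst (E k t)) y (fst (D k y)) /\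
     is_derive (fun t => snd (E k t)) y (snd (D k y))) ->
  is_derive energy4 y (energy4_deriv D y).
Proof.
  intros HD.
  assert (HN : forall k, (k <= 3)%nat ->
    is_derive (fun t => cnorm2 (E k t)) y (2 * cdot (E k y) (D k y))%R).
  { intros k Hk. apply is_derive_cnorm2; apply HD; exact Hk. }
  set (N := fun k t => cnorm2 (E k t)) in *.
  change (is_derive (fun t => N 0%nat t + N 1%nat t + N 2%nat t + N 3%nat t)%R y (energy4_deriv D y)).
  auto_derive.
  - repeat split; [exists (2 * cdot (E 0%nat y) (D 0%nat y))%R; apply HN; lia
                  | exists (2 * cdot (E 1%nat y) (D 1%nat y))%R; apply HN; lia
                  | exists (2 * cdot (E 2%nat y) (D 2%nat y))%R; apply HN; lia
                  | exists (2 * cdot (E 3%nat y) (D 3%nat y))%R; apply HN; lia].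
  - assert (DN : forall k, (k <= 3)%nat ->
      Derive (fun t : R => N k t) y = (2 * cdot (E k y) (D k y))%R)
      by (intros k Hk; apply is_derive_unique, HN, Hk).
    rewrite !DN by lia. unfold energy4_deriv. ring.
Qed.

Lemma continuous_energy4 (y : R) :
  (forall k, (k <= 3)%nat ->
     continuous (fun t => fst (E k t)) y /\ continuous (fun t => snd (E k t)) y) ->
  continuous energy4 y.
Proof.
  intros HC. unfold energy4, cnorm2.
  repeat match goal with
  | |- continuous (fun t => (_ + _)%R) _ => apply (continuous_plus (K := R_AbsRing) (V := R_NormedModule))
  | |- continuous (fun t => (_ * _)%R) _ => apply (continuous_mult (K := R_AbsRing))
  | |- continuous (fun t => fst (E ?k t)) _ => apply (HC k); lia
  | |- continuous (fun t => snd (E ?k t)) _ => apply (HC k); lia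
  end.
Qed.
End Energy.

Definition shift_rhs (lam : C) (E : nat -> R -> C) (k : nat) (x : R) : C :=
  match k with
  | 3%nat => lam * E 0%nat x
  | _ => E (S k) x
  end.

Lemma energy4_deriv_shift_bound (lam : C) (E : nat -> R -> C) (t : R) :
  (Rabs (energy4_deriv E (shift_rhs lam E) t) <= (2 + cnorm2 lam) * energy4 E t)%R.
Proof.
  unfold energy4_deriv, energy4, shift_rhs.
  pose proof (cdot_bound (E 0%nat t) (E 1%nat t)) as B0.
  pose proof (cdot_bound (E 1%nat t) (E 2%nat t)) as B1.
  pose proof (cdot_bound (E 2%nat t) (E 3%nat t)) as B2.
  pose proof (cdot_bound (E 3%nat t) (lam * E 0%nat t)) as B3.
  rewrite cnorm2_Cmult in B3.
  apply Rabs_le_between in B0, B1, B2, B3.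
  pose proof (Rmult_le_pos _ _ (cnorm2_nonneg lam) (cnorm2_nonneg (E 0%nat t))).
  pose proof (Rmult_le_pos _ _ (cnorm2_nonneg lam) (cnorm2_nonneg (E 1%nat t))).
  pose proof (Rmult_le_pos _ _ (cnorm2_nonneg lam) (cnorm2_nonneg (E 2%nat t))).
  pose proof (Rmult_le_pos _ _ (cnorm2_nonneg lam) (cnorm2_nonneg (E 3%nat t))).
  pose proof (cnorm2_nonneg (E 0%nat t)). pose proof (cnorm2_nonneg (E 1%nat t)).
  pose proof (cnorm2_nonneg (E 2%nat t)). pose proof (cnorm2_nonneg (E 3%nat t)).
  apply Rabs_le. rewrite !Rmult_plus_distr_l, !Rmult_plus_distr_r. lra.
Qed.

(* With [s = 1] at the left end and [s = -1] at the right end, [F y * exp (- s K y)]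
   is monotone away from [x0], hence vanishes once it vanishes at [x0]. *)
Lemma gronwall_signed (a b x0 s K : R) (F Fd : R -> R) :
  (s * s = 1)%R -> (a <= x0 <= b)%R -> (forall x, (a <= x <= b)%R -> 0 <= s * (x - x0))%R ->
  (forall y, (a < y < b)%R -> is_derive F y (Fd y)) ->
  (forall y, (a <= y <= b)%R -> continuous F y) ->
  (forall y, (a <= y <= b)%R -> Rabs (Fd y) <= K * F y)%R ->
  (forall y, 0 <= F y)%R -> F x0 = 0%R ->
  forall x, (a <= x <= b)%R -> F x = 0%R.
Proof.
  intros Hss Hx0 Hside HD HC Hb Hpos H0 x Hx.
  set (G := fun y => (F y * exp (- (s * K * y)))%R).
  set (Gd := fun y => ((Fd y - s * K * F y) * exp (- (s * K * y)))%R).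
  assert (Hmin : (a <= Rmin x x0)%R) by (unfold Rmin; destruct Rle_dec; lra).
  assert (Hmax : (Rmax x x0 <= b)%R) by (unfold Rmax; destruct Rle_dec; lra).
  destruct (MVT_gen G x x0 Gd) as [c [Hc HM]].
  - intros y Hy. unfold G, Gd. auto_derive.
    + exists (Fd y). apply HD. lra.
    + replace (Derive (fun t : R => F t) y) with (Fd y) by (symmetry; apply is_derive_unique, HD; lra).
      ring.
  - intros y Hy. apply continuity_pt_filterlim.
    change (continuous (fun t => F t * exp (- (s * K * t)))%R y).
    apply (continuous_mult (K := R_AbsRing)); [apply HC; lra |].
    apply continuous_exp_comp. apply (continuous_opp (K := R_AbsRing) (V := R_NormedModule)).
    apply (continuous_mult (K := R_AbsRing)); [apply continuous_const | apply continuous_id].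
  - unfold G in HM. rewrite H0, Rmult_0_l in HM.
    assert (Hsg : (s * Gd c <= 0)%R).
    { specialize (Hb c ltac:(lra)). apply Rabs_le_between in Hb.
      unfold Gd. rewrite <- Rmult_assoc. apply Rmult_le_0_r; [| left; apply exp_pos].
      replace (s * (Fd c - s * K * F c))%R with (s * Fd c - (s * s) * K * F c)%R by ring.
      rewrite Hss. destruct (Rle_dec 0 s); nra. }
    assert (Hprod : (0 <= Gd c * (x0 - x))%R).
    { specialize (Hside x Hx).
      replace (Gd c * (x0 - x))%R with ((s * Gd c) * - (s * (x - x0)))%R
        by (transitivity ((s * s) * (Gd c * (x0 - x)))%R; [ring | rewrite Hss; ring]).
      nra. }
    assert (Hex : (0 < exp (- (s * K * x)))%R) by apply exp_pos.
    specialize (Hpos x). nra.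
Qed.

Lemma gronwall_vanish (a b x0 K : R) (F Fd : R -> R) :
  (a < b)%R -> x0 = a \/ x0 = b ->
  (forall y, (a < y < b)%R -> is_derive F y (Fd y)) ->
  (forall y, (a <= y <= b)%R -> continuous F y) ->
  (forall y, (a <= y <= b)%R -> Rabs (Fd y) <= K * F y)%R ->
  (forall y, 0 <= F y)%R -> F x0 = 0%R ->
  forall x, (a <= x <= b)%R -> F x = 0%R.
Proof.
  intros Hab [-> | ->].
  - apply (gronwall_signed a b a 1); [ring | lra | intros; lra].
  - apply (gronwall_signed a b b (-1)); [ring | lra | intros; lra].
Qed.

(* The clamped family agrees with [E] on [[a, b]] and is defined on all of [R], as
   required by the two-sided derivatives and continuity of the mean value theorem. *)
Lemma shift_system_unique (a b x0 : R) (lam : C) (E : nat -> R -> C) :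
  (a < b)%R -> x0 = a \/ x0 = b ->
  (forall k x, (k <= 3)%nat -> (a <= x <= b)%R -> exists l, is_derive_within a b (E k) x l) ->
  (forall k x, (k <= 3)%nat -> (a < x < b)%R ->
     is_derive_within a b (E k) x (shift_rhs lam E k x)) ->
  (forall k, (k <= 3)%nat -> E k x0 = 0) ->
  forall k x, (k <= 3)%nat -> (a <= x <= b)%R -> E k x = 0.
Proof.
  intros Hab Hx0 Hex HD H0 k x Hk Hx.
  set (Ec := fun k t => E k (clamp a b t)).
  assert (HEc : forall t, (a <= t <= b)%R -> energy4 Ec t = energy4 E t)
    by (intros t Ht; unfold energy4, Ec; rewrite clamp_id by exact Ht; reflexivity).
  assert (Hx0' : (a <= x0 <= b)%R) by (destruct Hx0 as [-> | ->]; lra).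
  apply (energy4_eq0 E x); [| exact Hk]. rewrite <- (HEc x Hx).
  apply (gronwall_vanish a b x0 (2 + cnorm2 lam) _ (energy4_deriv Ec (shift_rhs lam Ec)) Hab Hx0);
    [| | intros y _; apply energy4_deriv_shift_bound | apply energy4_nonneg | | exact Hx].
  - intros y Hy. apply is_derive_energy4. intros j Hj.
    replace (shift_rhs lam Ec j y) with (shift_rhs lam E j y)
      by (destruct j as [|[|[|[|j]]]]; simpl; unfold Ec; rewrite clamp_id by lra; reflexivity).
    apply is_derive_clamp_components; [exact Hy | apply HD; [exact Hj | exact Hy]].
  - intros y Hy. apply continuous_energy4. intros j Hj.
    destruct (Hex j y Hj Hy) as [l Hl].
    apply (continuous_clamp_components a b (E j) y l); [lra | exact Hy | exact Hl].
  - rewrite (HEc x0 Hx0'). unfold energy4. rewrite !H0 by lia.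
    unfold cnorm2. simpl. ring.
Qed.

(* Derivatives of order [k] of [al z~2(x - x0) + be z~4(x - x0)], the solutions of
   [Y'''' = g^4 Y] with [Y(x0) = Y''(x0) = 0]. *)
Definition hinged_solution (g al be : C) (x0 : R) (k : nat) (x : R) : C :=
  match k with
  | 0%nat => al * zt2 g (x - x0) + be * zt4 g (x - x0)
  | 1%nat => al * zt1 g (x - x0) + be * zt3 g (x - x0)
  | 2%nat => al * (Cpow g 4 * zt4 g (x - x0)) + be * zt2 g (x - x0)
  | _ => al * (Cpow g 4 * zt3 g (x - x0)) + be * zt1 g (x - x0)
  end.

Lemma is_derive_within_hinged_solution (a b : R) (g al be : C) (x0 x : R) (k : nat) :
  g <> 0 -> (k <= 3)%nat ->
  is_derive_within a b (hinged_solution g al be x0 k) x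
    (shift_rhs (Cpow g 4) (hinged_solution g al be x0) k x).
Proof.
  intros Hg Hk. destruct k as [|[|[|[|k]]]]; try lia; simpl.
  - apply is_derive_within_lincomb; [apply is_derive_within_zt2 | apply is_derive_within_zt4]; exact Hg.
  - apply is_derive_within_lincomb; [apply is_derive_within_zt1 | apply is_derive_within_zt3]; exact Hg.
  - apply is_derive_within_lincomb;
      [apply is_derive_within_scal, is_derive_within_zt4 | apply is_derive_within_zt2]; exact Hg.
  - set (g4 := g * (g * (g * (g * 1)))).
    replace (g4 * (al * zt2 g (x - x0) + be * zt4 g (x - x0)))
      with (al * (g4 * zt2 g (x - x0)) + be * (g4 * zt4 g (x - x0))) by ring.
    apply is_derive_within_lincomb;
      [apply is_derive_within_scal, is_derive_within_zt3 | apply is_derive_within_zt1]; exact Hg.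
Qed.

Lemma hinged_solution_at_end (g al be : C) (x0 : R) :
  g <> 0 ->
  hinged_solution g al be x0 0 x0 = 0 /\ hinged_solution g al be x0 1 x0 = 2 * al /\
  hinged_solution g al be x0 2 x0 = 0 /\ hinged_solution g al be x0 3 x0 = 2 * be.
Proof.
  intros Hg. destruct (zt_at_0 g Hg) as [Z1 [Z2 [Z3 Z4]]]. simpl.
  rewrite Rminus_diag, Z1, Z2, Z3, Z4. repeat split; ring.
Qed.

Lemma hinged_segment (a b x0 : R) (g : C) (W : nat -> R -> C) :
  (a < b)%R -> x0 = a \/ x0 = b -> g <> 0 ->
  (forall k x, (k < 4)%nat -> (a <= x <= b)%R -> is_derive_within a b (W k) x (W (S k) x)) ->
  (forall x, (a < x < b)%R -> W 4%nat x = Cpow g 4 * W 0%nat x) ->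
  W 0%nat x0 = 0 -> W 2%nat x0 = 0 ->
  forall k x, (k <= 3)%nat -> (a <= x <= b)%R ->
    W k x = hinged_solution g (W 1%nat x0 / 2) (W 3%nat x0 / 2) x0 k x.
Proof.
  intros Hab Hx0 Hg HD Hode HW0 HW2 k x Hk Hx.
  set (Y := hinged_solution g (W 1%nat x0 / 2) (W 3%nat x0 / 2) x0).
  assert (HY : forall j y, (j <= 3)%nat -> is_derive_within a b (Y j) y (shift_rhs (Cpow g 4) Y j y))
    by (intros; apply is_derive_within_hinged_solution; assumption).
  assert (Hdiff : forall j y, (j <= 3)%nat -> (a < y < b)%R ->
    is_derive_within a b (fun t => W j t - Y j t) y
      (shift_rhs (Cpow g 4) (fun j t => W j t - Y j t) j y)).
  { intros j y Hj Hy.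
    replace (shift_rhs (Cpow g 4) (fun j t => W j t - Y j t) j y)
      with (W (S j) y - shift_rhs (Cpow g 4) Y j y)
      by (destruct j as [|[|[|[|j]]]]; try lia; simpl; try rewrite Hode by exact Hy; simpl; ring).
    apply is_derive_within_minus; [apply HD; [lia | lra] | apply HY; exact Hj]. }
  enough (Z : W k x - Y k x = 0) by (rewrite <- (Cplus_0_r (Y k x)), <- Z; ring).
  apply (shift_system_unique a b x0 (Cpow g 4) (fun j t => W j t - Y j t) Hab Hx0);
    [| exact Hdiff | | exact Hk | exact Hx].
  - intros j y Hj Hy. eexists.
    apply is_derive_within_minus; [apply HD; [lia | exact Hy] | apply HY; exact Hj].
  - destruct (hinged_solution_at_end g (W 1%nat x0 / 2) (W 3%nat x0 / 2) x0 Hg) as [Y0 [Y1 [Y2 Y3]]].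
    intros j Hj. destruct j as [|[|[|[|j]]]]; try lia; unfold Y.
    + rewrite Y0, HW0. ring.
    + rewrite Y1. field.
    + rewrite Y2, HW2. ring.
    + rewrite Y3. field.
Qed.

Lemma beam_ode_normal (rho EI : R) (s w w4 : C) :
  rho <> 0%R -> EI <> 0%R ->
  s * s * w + RtoC (EI / rho) * w4 = 0 -> w4 = Cpow (gam rho EI s) 4 * w.
Proof.
  intros Hrho HEI E. rewrite gam_pow4. rewrite RtoC_div in E by exact Hrho.
  assert (Hrho' := RtoC_neq0 rho Hrho). assert (HEI' := RtoC_neq0 EI HEI).
  replace w4 with ((s * s * w + RtoC EI / RtoC rho * w4) * (RtoC rho / RtoC EI)
                   - s * s * w * (RtoC rho / RtoC EI)) by (field; split; assumption).
  rewrite E. field. exact HEI'.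
Qed.

Lemma beam_segment (a b xe rho EI : R) (s : C) (W : R -> C) (D : nat -> R -> C) :
  (a < b)%R -> xe = a \/ xe = b -> (0 < rho)%R -> (0 < EI)%R -> s <> 0 ->
  Cn_on 4 a b W D ->
  (forall x, (a < x < b)%R -> s * s * W x + RtoC (EI / rho) * D 4%nat x = 0) ->
  W xe = 0 -> D 2%nat xe = 0 ->
  forall k x, (k <= 3)%nat -> (a <= x <= b)%R ->
    D k x = hinged_solution (gam rho EI s) (D 1%nat xe / 2) (D 3%nat xe / 2) xe k x.
Proof.
  intros Hab Hxe Hrho HEI Hs [D0 [Dd _]] Hode HW HD2.
  assert (Hxe' : (a <= xe <= b)%R) by (destruct Hxe as [-> | ->]; lra).
  apply hinged_segment; [exact Hab | exact Hxe | apply gam_neq0; [lra | lra | exact Hs]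
    | exact Dd | | rewrite D0 by exact Hxe'; exact HW | exact HD2].
  intros x Hx. apply beam_ode_normal; [lra | lra |]. rewrite D0 by lra. apply Hode, Hx.
Qed.

Lemma is_inverse4_solve (M N : nat -> nat -> C) (x1 x2 x3 x4 r : C) :
  is_inverse4 M N ->
  M 1%nat 1%nat * x1 + M 1%nat 2%nat * x2 + M 1%nat 3%nat * x3 + M 1%nat 4%nat * x4 = 0 ->
  M 2%nat 1%nat * x1 + M 2%nat 2%nat * x2 + M 2%nat 3%nat * x3 + M 2%nat 4%nat * x4 = 0 ->
  M 3%nat 1%nat * x1 + M 3%nat 2%nat * x2 + M 3%nat 3%nat * x3 + M 3%nat 4%nat * x4 = 0 ->
  M 4%nat 1%nat * x1 + M 4%nat 2%nat * x2 + M 4%nat 3%nat * x3 + M 4%nat 4%nat * x4 = r ->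
  x1 = N 1%nat 4%nat * r /\ x2 = N 2%nat 4%nat * r /\ x3 = N 3%nat 4%nat * r /\ x4 = N 4%nat 4%nat * r.
Proof.
  intros H R1 R2 R3 R4.
  set (row i := M i 1%nat * x1 + M i 2%nat * x2 + M i 3%nat * x3 + M i 4%nat * x4).
  change (row 1%nat = 0) in R1. change (row 2%nat = 0) in R2.
  change (row 3%nat = 0) in R3. change (row 4%nat = r) in R4.
  assert (K : forall i, N i 4%nat * r =
    mul4 N M i 1%nat * x1 + mul4 N M i 2%nat * x2 + mul4 N M i 3%nat * x3 + mul4 N M i 4%nat * x4).
  { intros i. transitivity (N i 1%nat * row 1%nat + N i 2%nat * row 2%nat
                            + N i 3%nat * row 3%nat + N i 4%nat * row 4%nat).
    - rewrite R1, R2, R3, R4. ring.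
    - unfold row, mul4. ring. }
  assert (D : forall i j, (1 <= i <= 4)%nat -> (1 <= j <= 4)%nat ->
    mul4 N M i j = if Nat.eqb i j then 1 else 0) by (intros; apply H; assumption).
  repeat split; rewrite K, !D by lia; simpl; ring.
Qed.

Lemma interface_coefficients (l l0 rho EI m kap d : R) (s : C) (Minv : nat -> nat -> C)
  (al be al' be' r : C) :
  is_inverse4 (Mt l l0 rho EI m kap d s) Minv ->
  let Y := hinged_solution (gam rho EI s) al be 0 in
  let Y' := hinged_solution (gam rho EI s) al' be' l in
  Y 0%nat l0 = Y' 0%nat l0 -> Y 1%nat l0 = Y' 1%nat l0 -> Y 2%nat l0 = Y' 2%nat l0 ->
  (RtoC m * (s * s) + RtoC d * s + RtoC kap) / RtoC EI * Y 0%nat l0 - Y 3%nat l0 + Y' 3%nat l0 = r ->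
  al = Minv 1%nat 4%nat * r /\ be = Minv 2%nat 4%nat * r /\
  al' = Minv 3%nat 4%nat * r /\ be' = Minv 4%nat 4%nat * r.
Proof.
  intros HM Y Y' C0 C1 C2 C3.
  unfold Y, Y', hinged_solution in C0, C1, C2, C3. rewrite Rminus_0_r in C0, C1, C2, C3.
  apply (is_inverse4_solve _ _ _ _ _ _ r HM); unfold Mt; cbv zeta iota.
  - apply Ceq_minus in C0. rewrite <- C0. ring.
  - apply Ceq_minus in C1. rewrite <- C1. ring.
  - apply Ceq_minus in C2. rewrite <- C2. ring.
  - rewrite <- C3. ring.
Qed.

Theorem proposition2
  (l l0 rho EI m kap d : R)
  (Hl : (0 < l)%R) (Hl0 : (0 < l0 < l)%R) (Hrho : (0 < rho)%R) (HEI : (0 < EI)%R)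
  (Hm : (0 < m)%R) (Hkap : (0 < kap)%R) (Hd : (0 < d)%R)
  (s : C) (Hs : s <> 0)
  (Minv : nat -> nat -> C) (HMinv : is_inverse4 (Mt l l0 rho EI m kap d s) Minv)
  (U : C) (W : R -> C) (W1 W2 : nat -> R -> C)
  (HW1 : Cn_on 4 0 l0 W W1) (HW2 : Cn_on 4 l0 l W W2)
  (Hode1 : forall x, (0 < x < l0)%R -> s * s * W x + RtoC (EI / rho) * W1 4%nat x = 0)
  (Hode2 : forall x, (l0 < x < l)%R -> s * s * W x + RtoC (EI / rho) * W2 4%nat x = 0)
  (Hbc0 : W 0%R = 0) (Hbcl : W l = 0)
  (Hbc0' : W1 2%nat 0%R = 0) (Hbcl' : W2 2%nat l = 0)
  (Hint : forall j, (j <= 2)%nat -> W1 j l0 = W2 j l0)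
  (Hmass : (RtoC m * (s * s) + RtoC d * s + RtoC kap) * W l0
           = RtoC EI * (W1 3%nat l0 - W2 3%nat l0) + U)
  (lk : R) (Hlk : (0 <= lk <= l)%R) :
  W lk = Ht1 l l0 rho EI s Minv lk * U /\
  (if Rle_dec lk l0 then W1 2%nat lk else W2 2%nat lk) = Ht2 l l0 rho EI s Minv lk * U.
Proof.
  set (g := gam rho EI s).
  assert (P1 := beam_segment 0 l0 0 rho EI s W W1 ltac:(lra) (or_introl eq_refl)
                  Hrho HEI Hs HW1 Hode1 Hbc0 Hbc0').
  assert (P2 := beam_segment l0 l l rho EI s W W2 ltac:(lra) (or_intror eq_refl)
                  Hrho HEI Hs HW2 Hode2 Hbcl Hbcl').
  fold g in P1, P2. destruct HW1 as [W1_0 _], HW2 as [W2_0 _].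
  destruct (interface_coefficients l l0 rho EI m kap d s Minv
    (W1 1%nat 0%R / 2) (W1 3%nat 0%R / 2) (W2 1%nat l / 2) (W2 3%nat l / 2) (/ RtoC EI * U) HMinv)
    as [Hal [Hbe [Hal' Hbe']]]; fold g.
  1-3: rewrite <- P1, <- P2 by (lia || lra); apply Hint; lia.
  { rewrite <- P1, <- P1, <- P2, W1_0 by (lia || lra).
    replace U with ((RtoC m * (s * s) + RtoC d * s + RtoC kap) * W l0
                    - RtoC EI * (W1 3%nat l0 - W2 3%nat l0)) by (rewrite Hmass; ring).
    field. apply RtoC_neq0. lra. }
  unfold Ht1, Ht2. fold g. destruct (Rle_dec lk l0) as [Hle | Hgt].
  - rewrite <- (W1_0 lk), (P1 0%nat lk), (P1 2%nat lk) by (lia || lra). unfold hinged_solution.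
    rewrite Rminus_0_r, Hal, Hbe. split; ring.
  - rewrite <- (W2_0 lk), (P2 0%nat lk), (P2 2%nat lk) by (lia || lra). unfold hinged_solution.
    rewrite Hal', Hbe'. split; ring.
Qed.
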